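(* Let $\omega$ be a weight on a countable group $G$, and let $\mu$ be a probability measure on $G$ with finite first $\log\omega$-moment. Then: (i) $\mathrm{Ly}_\omega(G,\mu)\ge 0$; (ii) if $\tilde\omega$ is a weight on $G$ equivalent to $\omega$, then $\mathrm{Ly}_{\tilde\omega}(G,\mu)=\mathrm{Ly}_\omega(G,\mu)$; (iii) if $G$ is finitely generated with finite symmetric generating set $S$ containing $e$ and $\mu$ has finite first moment with respect to the word length $|\cdot|_S$, then the Lyapunov exponent of $\mu$ with respect to $\omega$ exists and \[ \mathrm{Ly}_\omega(G,\mu)\le(\log\omega_S)\,l(G,\mu). \]
   Context: A weight on $G$ is $\omega:G\to[a,\infty)$, $a>0$, with $\omega(st)\le C\omega(s)\omega(t)$ for some $C>0$ and all $s,t$. Two weights $\omega,\tilde\omega$ are equivalent if $c\,\omega\le\tilde\omega\le c'\omega$ for some $c,c'>0$. Finite first $\log\omega$-moment means $\sum_s\mu(s)\log\omega(s)<\infty$. The Lyapunov exponent is $\mathrm{Ly}_\omega(G,\mu)=\lim_{n\to\infty}\frac1n\sum_s\mu^{*n}(s)\log\omega(s)$, where $\mu^{*n}$ is the $n$-fold convolution power ($\mu*\nu(s)=\sum_t\mu(t)\nu(t^{-1}s)$). For finite symmetric generating $S\ni e$, the growth rate is $\omega_S=\lim_{n\to\infty}\sup_{s\in S^n}\omega(s)^{1/n}$; finite first moment means $\sum_s\mu(s)|s|_S<\infty$; the speed is $l(G,\mu)=\lim_{n\to\infty}\frac1n\sum_s\mu^{*n}(s)|s|_S$. *)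

From HB Require Import structures.
From mathcomp Require Import all_boot all_order all_algebra.
From mathcomp Require Import monoid.
From mathcomp Require Import all_classical all_reals all_analysis.

Set Implicit Arguments.
Unset Strict Implicit.
Unset Printing Implicit Defensive.
Import Order.TTheory GRing.Theory Num.Theory.
Import numFieldNormedType.Exports.

Local Open Scope classical_set_scope.
Local Open Scope ring_scope.

Section Defs.
Variables (R : realType) (G : groupType).

Definition countable_group : Prop := exists f : G -> nat, injective f.

Definition is_weight (w : G -> R) : Prop :=
  (exists a : R, 0 < a /\ forall s, a <= w s) /\
  (exists C : R, 0 < C /\ forall s t, w (s * t)%g <= C * w s * w t).

Definition equiv_weights (w w' : G -> R) : Prop :=
  exists c c' : R, 0 < c /\ 0 < c' /\ forall s, c * w s <= w' s /\ w' s <= c' * w s.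

Definition is_prob (mu : G -> R) : Prop :=
  (forall s, 0 <= mu s) /\ (\esum_(s in [set: G]) (mu s)%:E = 1)%E.

Definition conv (mu nu : G -> R) (s : G) : R :=
  fine (\esum_(t in [set: G]) (mu t * nu (t^-1 * s)%g)%:E)%E.

Definition dirac_e (s : G) : R := if s == 1%g then 1 else 0.

Fixpoint convpow (mu : G -> R) (n : nat) : G -> R :=
  match n with
  | 0%N => dirac_e
  | n'.+1 => conv (convpow mu n') mu
  end.

(* sum over G of a real function (as the difference of the sums of its
   positive and negative parts; meaningful for absolutely summable f) *)
Definition gsum (f : G -> R) : R :=
  fine (\esum_(s in [set: G]) (Num.max (f s) 0)%:E)%E
  - fine (\esum_(s in [set: G]) (Num.max (- f s) 0)%:E)%E.

Definition finite_log_moment (w : G -> R) (mu : G -> R) : Prop :=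
  (\esum_(s in [set: G]) (mu s * `|ln (w s)|)%:E < +oo)%E.

Definition ly_seq (w : G -> R) (mu : G -> R) (n : nat) : R :=
  n%:R^-1 * gsum (fun s => convpow mu n s * ln (w s)).

Definition Ly (w : G -> R) (mu : G -> R) : R := limn (ly_seq w mu).

Definition in_pow (S : seq G) (n : nat) (s : G) : Prop :=
  exists l : seq G, [/\ size l = n, all (fun x => x \in S) l & foldr (fun x y => (x * y)%g) 1%g l = s].

Definition symmetric_gen_set (S : seq G) : Prop :=
  [/\ 1%g \in S, (forall x, x \in S -> x^-1%g \in S) & forall s, exists n, in_pow S n s].

Definition wordlen (S : seq G) (s : G) : nat :=
  match pselect (exists n, `[< in_pow S n s >]) with
  | left h => ex_minn h
  | right _ => 0%N
  end.

Definition growth_seq (w : G -> R) (S : seq G) (n : nat) : R :=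
  sup [set w s `^ (n%:R^-1) | s in [set s | in_pow S n s]].

Definition growth_rate (w : G -> R) (S : seq G) : R := limn (growth_seq w S).

Definition finite_first_moment (S : seq G) (mu : G -> R) : Prop :=
  (\esum_(s in [set: G]) (mu s * (wordlen S s)%:R)%:E < +oo)%E.

Definition speed_seq (S : seq G) (mu : G -> R) (n : nat) : R :=
  n%:R^-1 * fine (\esum_(s in [set: G]) (convpow mu n s * (wordlen S s)%:R)%:E)%E.

Definition speed (S : seq G) (mu : G -> R) : R := limn (speed_seq S mu).

End Defs.

(** Adding a constant [K] to [ln w] gives a nonnegative subadditive function
    [h] on [G].  For such an [h] the means [E_n = sum_s mu^{*n}(s) h(s)] are
    subadditive in [n] because [mu^{*(n+m)} = mu^{*n} * mu^{*m}], so by Fekete's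
    lemma [E_n / n] converges to a nonnegative limit, and the Lyapunov sequence
    is [E_n / n - K / n]; this gives (i).  These limits are monotone under
    pointwise domination [h <= c f + D], which gives (ii) (dominate by the
    shifted logarithm of the equivalent weight) and (iii) (dominate by the word
    length): the word suprema [M_k = sup_{s in S^k} h(s)] are again subadditive,
    so [h(s) <= |s|_S M_k / k + O(1)] for every [k], and [M_k / k --> ln w_S]. *)

From Pilot Require Import Defs.
From HB Require Import structures.
From mathcomp Require Import all_boot all_order all_algebra.
From mathcomp Require Import monoid.
From mathcomp Require Import all_classical all_reals all_analysis.
From mathcomp Require Import lra.
Import Order.TTheory GRing.Theory Num.Theory.
Import numFieldNormedType.Exports.
Set Implicit Arguments.
Unset Strict Implicit.
Unset Printing Implicit Defensive.
Local Open Scope classical_set_scope.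
Local Open Scope ring_scope.

Section ExtendedSums.
Variables (R : realType) (T : choiceType).
Local Open Scope ereal_scope.

Lemma esum_ge_term (I : set T) (a : T -> \bar R) i :
  I i -> 0 <= a i -> a i <= \esum_(j in I) a j.
Proof.
move=> Ii a0; apply: esum_ge; exists [set i].
  by split; [exact: finite_set1 | move=> x ->].
by rewrite fsbig_set1.
Qed.

Lemma esumZl (I : set T) (c : \bar R) (a : T -> \bar R) :
  0 <= c -> (forall i, 0 <= a i) ->
  \esum_(i in I) (c * a i) = c * \esum_(i in I) a i.
Proof.
case: c => [r| |] // c0 a0.
- rewrite lee_fin in c0; rewrite /esum -ereal_supZl //; last first.
    by apply/set0P; exists 0; exists set0; [split | rewrite fsbig_set0].
  congr ereal_sup; apply/seteqP; split => x /=.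
  + move=> [A [finA AI] <-]; exists (\sum_(i \in A) a i); first by exists A.
    by rewrite !fsbig_finite // ge0_sume_distrr.
  + move=> [y [A [finA AI] <-] <-]; exists A => //.
    by rewrite !fsbig_finite // ge0_sume_distrr.
- have [[i [Ii ai]]|all0] := pselect (exists i, I i /\ 0 < a i).
    have sum_gt0 : 0 < \esum_(j in I) a j := lt_le_trans ai (esum_ge_term Ii (a0 i)).
    rewrite gt0_mulye //; apply/eqP; rewrite eq_le leey /=.
    have := esum_ge_term (a := fun i => +oo * a i) Ii (mule_ge0 c0 (a0 i)).
    by rewrite gt0_mulye.
  have a_eq0 i : I i -> a i = 0.
    move=> Ii; apply/eqP; rewrite eq_le a0 andbT leNgt; apply/negP => ai.
    by apply: all0; exists i.
  by rewrite (esum1 a_eq0) mule0 esum1 // => i Ii; rewrite a_eq0 // mule0.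
Qed.

Lemma esum_swap (T' : choiceType) (F : T -> T' -> \bar R) :
  (forall i j, 0 <= F i j) ->
  \esum_(i in [set: T]) \esum_(j in [set: T']) F i j =
  \esum_(j in [set: T']) \esum_(i in [set: T]) F i j.
Proof.
move=> F0; rewrite !esum_esum //.
have -> : [set: T] `*`` (fun=> [set: T']) = [set: T * T'] by apply/seteqP.
have -> : [set: T'] `*`` (fun=> [set: T]) = [set: T' * T] by apply/seteqP.
rewrite (@reindex_esum _ _ _ [set: T' * T] [set: T * T'] (fun x => (x.2, x.1))) //.
by rewrite setTT_bijective; exists (fun x => (x.2, x.1)); case.
Qed.

End ExtendedSums.

Section Mean.
Variables (R : realType) (G : groupType).
Local Open Scope ereal_scope.

Definition pmean (nu : G -> R) (f : G -> \bar R) : \bar R :=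
  \esum_(s in [set: G]) (nu s)%:E * f s.

Section NonnegativeMass.
Variables (nu : G -> R).
Hypothesis nu_ge0 : forall s, (0 <= nu s)%R.

Lemma pmean_ge0 f : (forall s, 0 <= f s) -> 0 <= pmean nu f.
Proof. by move=> f0; apply: esum_ge0 => s _; apply: mule_ge0; rewrite ?lee_fin. Qed.

Lemma le_pmean f g : (forall s, f s <= g s) -> pmean nu f <= pmean nu g.
Proof. by move=> fg; apply: le_esum => s _; rewrite lee_wpmul2l ?lee_fin. Qed.

Lemma pmeanD f g : (forall s, 0 <= f s) -> (forall s, 0 <= g s) ->
  pmean nu (fun s => f s + g s) = pmean nu f + pmean nu g.
Proof.
move=> f0 g0; have nuf0 k (k0 : forall s, 0 <= k s) s : 0 <= (nu s)%:E * k s.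
  by apply: mule_ge0; rewrite ?lee_fin.
rewrite /pmean -esumD => [|s _|s _]; [|exact: nuf0..].
by apply: eq_esum => s _; rewrite ge0_muleDr.
Qed.

Lemma pmeanZl c f : 0 <= c -> (forall s, 0 <= f s) ->
  pmean nu (fun s => c * f s) = c * pmean nu f.
Proof.
move=> c0 f0; rewrite /pmean -esumZl // => [|s]; last by apply: mule_ge0; rewrite ?lee_fin.
by apply: eq_esum => s _; rewrite muleCA.
Qed.

End NonnegativeMass.

Section Probability.
Variable nu : G -> R.
Hypothesis hnu : is_prob nu.

Lemma prob_le1 s : (nu s <= 1)%R.
Proof.
have [nu0 nu1] := hnu; rewrite -lee_fin -nu1.
by apply: (esum_ge_term (a := fun s => (nu s)%:E)); rewrite ?lee_fin.
Qed.

Lemma pmean_cst c : 0 <= c -> pmean nu (fun=> c) = c.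
Proof.
move=> c0; have [nu0 nu1] := hnu; rewrite /pmean.
by under eq_esum do rewrite muleC; rewrite esumZl ?nu1 ?mule1 // => s; rewrite lee_fin.
Qed.

Lemma pmean_affine f (c D : R) : (forall s, 0 <= f s)%R -> (0 <= c)%R -> (0 <= D)%R ->
  pmean nu (fun s => (c * f s + D)%:E) = c%:E * pmean nu (fun s => (f s)%:E) + D%:E.
Proof.
move=> f0 c0 D0; have nu0 := hnu.1.
have -> : (fun s => (c * f s + D)%:E) = (fun s => c%:E * (f s)%:E + D%:E) by [].
rewrite pmeanD // => [|s]; last by rewrite -EFinM lee_fin mulr_ge0.
by rewrite pmeanZl ?pmean_cst ?lee_fin.
Qed.

Lemma pmean_dominated_lty (f g : G -> R) (c D : R) :
  (forall s, 0 <= g s)%R -> (0 <= c)%R -> (forall s, f s <= c * g s + D)%R ->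
  pmean nu (fun s => (g s)%:E) < +oo -> pmean nu (fun s => (f s)%:E) < +oo.
Proof.
move=> g0 c0 fg g_fin; have D0 : (0 <= Num.max D 0)%R by rewrite le_max lexx orbT.
apply: (@le_lt_trans _ _ (pmean nu (fun s => (c * g s + Num.max D 0)%:E))).
  apply: le_pmean => [|s]; first exact: hnu.1.
  by rewrite lee_fin (le_trans (fg s)) // lerD2l le_max lexx.
by rewrite pmean_affine // lte_add_pinfty ?ltry // lte_mul_pinfty ?lee_fin.
Qed.

Lemma gsum_mul_shift (f : G -> R) (K : R) : (0 <= K)%R ->
  (forall s, 0 <= f s + K)%R -> pmean nu (fun s => (f s + K)%:E) < +oo ->
  gsum (fun s => nu s * f s)%R = (fine (pmean nu (fun s => (f s + K)%:E)) - K)%R.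
Proof.
move=> K0 fK0 fK_fin; have nu0 := hnu.1.
have max_ge0 (x : R) : 0 <= (Num.max x 0)%:E by rewrite lee_fin le_max lexx orbT.
have pmean_max g : \esum_(s in [set: G]) (Num.max (nu s * g s)%R 0)%:E =
    pmean nu (fun s => (Num.max (g s) 0)%:E).
  by apply: eq_esum => s _; rewrite -EFinM maxr_pMr ?mulr0.
rewrite /gsum /=; under [X in (_ - fine X)%R]eq_esum do rewrite -mulrN.
rewrite !pmean_max.
set X := pmean _ _; set Y := pmean _ _; set A := pmean _ _.
have balance : A + Y = X + K%:E.
  rewrite /A /Y /X -(pmean_cst (c := K%:E)) ?lee_fin //.
  rewrite -!pmeanD //.
  congr pmean; apply: funext => s; rewrite -!EFinD; congr EFin.
  have [fs_ge0|fs_lt0] := lerP 0 (f s).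
    by rewrite max_r ?oppr_le0 // addr0.
  by rewrite max_l ?oppr_ge0 ?ltW //; lra.
have Y_le : Y <= K%:E.
  rewrite -(pmean_cst (c := K%:E)) ?lee_fin //; apply: le_pmean => // s.
  by rewrite lee_fin ge_max K0 andbT; have := fK0 s; lra.
have [X0 Y0 A0] : [/\ 0 <= X, 0 <= Y & 0 <= A].
  by split; apply: pmean_ge0 => // s; rewrite lee_fin ?le_max ?lexx ?orbT ?fK0.
move: balance Y_le X0 Y0 A0 fK_fin; rewrite -/A.
case: A => [a| |] //; case: Y => [y| |] //; case: X => [x| |] //= [] balance *.
by lra.
Qed.

End Probability.

Section Convolution.
Variables (nu mu : G -> R).
Hypotheses (hnu : is_prob nu) (hmu : is_prob mu).

Lemma EFin_conv s :
  (Defs.conv nu mu s)%:E = \esum_(t in [set: G]) (nu t * mu (t^-1 * s)%g)%:E.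
Proof.
have [[nu0 nu1] [mu0 _]] := (hnu, hmu).
rewrite fineK // ge0_fin_numE; last by apply: esum_ge0 => t _; rewrite lee_fin mulr_ge0.
apply: (@le_lt_trans _ _ (\esum_(t in [set: G]) (nu t)%:E)); last by rewrite nu1 ltry.
by apply: le_esum => t _; rewrite lee_fin ler_piMr // (prob_le1 hmu).
Qed.

Lemma pmean_conv f : (forall s, 0 <= f s) ->
  pmean (Defs.conv nu mu) f = pmean nu (fun t => pmean mu (fun z => f (t * z)%g)).
Proof.
have [nu0 mu0] := (hnu.1, hmu.1); move=> f0.
have num0 t s : 0 <= (nu t * mu (t^-1 * s)%g)%:E by rewrite lee_fin mulr_ge0.
transitivity (\esum_(s in [set: G]) \esum_(t in [set: G])
    ((nu t * mu (t^-1 * s)%g)%:E * f s)).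
  apply: eq_esum => s _; rewrite EFin_conv muleC -esumZl //.
  by apply: eq_esum => t _; rewrite muleC.
rewrite esum_swap => [|s t]; last exact: mule_ge0.
apply: eq_esum => t _.
rewrite (@reindex_esum _ _ _ [set: G] [set: G] (fun z => (t * z)%g)); last first.
  rewrite setTT_bijective; exists (fun s => (t^-1 * s)%g) => z /=; [exact: mulKg|exact: mulVKg].
rewrite -esumZl ?lee_fin // => [|z]; last by apply: mule_ge0; rewrite ?lee_fin.
by apply: eq_esum => z _; rewrite mulKg EFinM muleA.
Qed.

Lemma conv_prob : is_prob (Defs.conv nu mu).
Proof.
have [nu0 mu0] := (hnu.1, hmu.1); split => [s|].
  by rewrite fine_ge0 // esum_ge0 // => t _; rewrite lee_fin mulr_ge0.
have := pmean_conv (fun=> lee01).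
rewrite (_ : (fun t => pmean mu (fun=> 1)) = fun=> 1); last first.
  by apply: funext => t; rewrite (pmean_cst hmu).
rewrite (pmean_cst hnu) // => <-.
by apply: eq_esum => s _; rewrite mule1.
Qed.

End Convolution.

Lemma pmean_dirac f : (forall s, 0 <= f s) -> pmean (@dirac_e R G) f = f 1%g.
Proof.
have dirac0 (s : G) : (0 <= @dirac_e R G s)%R by rewrite /dirac_e; case: ifP.
move=> f0; rewrite /pmean (esumID [set 1%g]) => [|s _]; last by apply: mule_ge0; rewrite ?lee_fin.
rewrite setTI esum_set1 /dirac_e ?eqxx ?mul1e // esum1 ?adde0 // => s [_ /= s1].
by rewrite ifN ?mul0e //; apply/eqP.
Qed.

Lemma dirac_prob : is_prob (@dirac_e R G).
Proof.
split=> [s|]; first by rewrite /dirac_e; case: ifP.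
have := pmean_dirac (fun=> lee01); rewrite /pmean => <-.
by apply: eq_esum => s _; rewrite mule1.
Qed.

End Mean.

Definition nonneg_subadditive (R : realType) (G : groupType) (h : G -> R) :=
  (forall s, 0 <= h s) /\ (forall s t, h (s * t)%g <= h s + h t).

Section ConvolutionPower.
Variables (R : realType) (G : groupType) (mu : G -> R).
Hypothesis hmu : is_prob mu.
Local Open Scope ereal_scope.

Lemma convpow_prob n : is_prob (convpow mu n).
Proof. by elim: n => [|n IH] /=; [exact: dirac_prob | exact: conv_prob]. Qed.

Let convpow_ge0 n s : (0 <= convpow mu n s)%R := (convpow_prob n).1 s.

Lemma pmean_convpowD n m f : (forall s, 0 <= f s) ->
  pmean (convpow mu (n + m)) f =
  pmean (convpow mu n) (fun x => pmean (convpow mu m) (fun y => f (x * y)%g)).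
Proof.
elim: m f => [|m IH] f f0.
  by rewrite addn0; congr pmean; apply: funext => x; rewrite pmean_dirac ?mulg1.
have mu_f0 t : 0 <= pmean mu (fun z => f (t * z)%g) by apply: pmean_ge0 => //; exact: hmu.1.
rewrite addnS /= (pmean_conv (convpow_prob _) hmu) // IH //.
congr pmean; apply: funext => x; rewrite (pmean_conv (convpow_prob _) hmu) //.
by congr pmean; apply: funext => t; congr pmean; apply: funext => z; rewrite mulgA.
Qed.

Lemma pmean_convpow1 f : (forall s, 0 <= f s) -> pmean (convpow mu 1) f = pmean mu f.
Proof.
move=> f0; rewrite /= (pmean_conv (dirac_prob R G) hmu) // pmean_dirac => [|t].
  by congr pmean; apply: funext => z; rewrite mul1g.
by apply: pmean_ge0 => //; exact: hmu.1.
Qed.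

Section SubadditiveMean.
Variable h : G -> R.
Hypothesis hh : nonneg_subadditive h.

Let h_ge0 s : 0 <= (h s)%:E. Proof. by rewrite lee_fin; exact: hh.1. Qed.

Lemma pmean_convpow_subadd n m :
  pmean (convpow mu (n + m)) (fun s => (h s)%:E) <=
  pmean (convpow mu n) (fun s => (h s)%:E) + pmean (convpow mu m) (fun s => (h s)%:E).
Proof.
have mean_ge0 k : 0 <= pmean (convpow mu k) (fun s => (h s)%:E) by exact: pmean_ge0.
rewrite pmean_convpowD // -[X in _ + X](pmean_cst (convpow_prob n)) // -pmeanD //.
apply: le_pmean => // x; rewrite -[(h x)%:E](pmean_cst (convpow_prob m)) // -pmeanD //.
by apply: le_pmean => // y; rewrite lee_fin; exact: hh.2.
Qed.

Hypothesis h_fin : pmean mu (fun s => (h s)%:E) < +oo.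

Lemma pmean_convpow_fin n : pmean (convpow mu n) (fun s => (h s)%:E) < +oo.
Proof.
elim: n => [|n IH]; first by rewrite pmean_dirac ?ltry.
rewrite -addn1; apply: le_lt_trans (pmean_convpow_subadd n 1) _.
by rewrite lte_add_pinfty // pmean_convpow1.
Qed.

End SubadditiveMean.
End ConvolutionPower.

Section Fekete.
Variable R : realType.

Lemma cvg_divrn0 (c : R) : (fun n : nat => c / n%:R) @ \oo --> 0.
Proof.
rewrite -cvg_shiftS.
have -> : [sequence c / n.+1%:R]_n = (fun n => c * harmonic n) by [].
have := @cvgMl_tmp R nat \oo _ (@harmonic R) c 0 cvg_harmonic; rewrite mulr0.
exact.
Qed.

Variable u : nat -> R.
Hypotheses (u_ge0 : forall n, 0 <= u n) (u_subadd : forall n m, u (n + m)%N <= u n + u m).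

Lemma subadditive_mulnD k q r : u (q * k + r)%N <= q%:R * u k + u r.
Proof.
elim: q r => [|q IH] r; first by rewrite mul0n add0n mul0r add0r.
rewrite mulSn -addnA; apply: le_trans (u_subadd _ _) _.
by rewrite mulrSr; have := IH r; lra.
Qed.

Lemma subadditive_le_lin k : (0 < k)%N ->
  exists M, forall j, u j <= j%:R * (u k / k%:R) + M.
Proof.
move=> k0; exists (\sum_(r < k) u r) => j.
rewrite {1}(divn_eq j k); apply: le_trans (subadditive_mulnD _ _ _) _.
apply: lerD.
  have q_le : (j %/ k)%:R <= j%:R / k%:R :> R.
    rewrite ler_pdivlMr ?ltr0n // -natrM ler_nat.
    by rewrite [leqRHS](divn_eq j k) leq_addr.
  by apply: le_trans (ler_wpM2r (u_ge0 k) q_le) _; rewrite mulrCA mulrC.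
have r_lt : (j %% k < k)%N by rewrite ltn_mod.
by rewrite (bigD1 (Ordinal r_lt)) //= lerDl; exact: sumr_ge0.
Qed.

Lemma fekete : exists2 g, (fun n => u n / n%:R) @ \oo --> g & 0 <= g.
Proof.
pose E := [set u n / n%:R | n in [set n | (0 < n)%N]].
have E_lb : lbound E 0 by move=> _ [n _ <-]; rewrite divr_ge0.
have E_inf : has_inf E by split; [exists (u 1%N / 1%:R); exists 1%N | exists 0].
exists (inf E); last exact: lb_le_inf E_inf.1 E_lb.
apply/cvgrPdist_lt => e e0.
have e20 : 0 < e / 2 by rewrite divr_gt0.
have [_ [k k0 <-] uk_lt] := inf_adherent e20 E_inf.
have [M uM] := subadditive_le_lin k0.
near=> n.
have n0 : (0 < n)%N by near: n; exact: nbhs_infty_gt.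
have n_gt0 : 0 < n%:R :> R by rewrite ltr0n.
have M_lt : 2 * M / e < n%:R by near: n; exact: nbhs_infty_gtr.
have inf_le : inf E <= u n / n%:R by apply: ge_inf; [exact: E_inf.2 | exists n].
have un_le : u n / n%:R <= u k / k%:R + M / n%:R.
  by rewrite ler_pdivrMr // mulrDl divfK ?gt_eqF // mulrC; exact: uM.
have Mn_lt : M / n%:R < e / 2.
  by rewrite ltr_pdivrMr //; move: M_lt; rewrite ltr_pdivrMr //; nra.
by rewrite ler0_norm; lra.
Unshelve. all: end_near.
Qed.

End Fekete.

Local Notation mean_finite mu h := (pmean mu (fun s => (h s)%:E) < +oo)%E.

Section Rate.
Variables (R : realType) (G : groupType) (mu : G -> R).
Hypothesis hmu : is_prob mu.

Definition drift (h : G -> R) (n : nat) : R :=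
  fine (pmean (convpow mu n) (fun s => (h s)%:E)).

Definition rate (h : G -> R) : R := limn (fun n => drift h n / n%:R).

Section SubadditiveDrift.
Variable h : G -> R.
Hypotheses (hh : nonneg_subadditive h) (h_fin : mean_finite mu h).

Lemma EFin_drift n : (drift h n)%:E = pmean (convpow mu n) (fun s => (h s)%:E).
Proof.
rewrite fineK // ge0_fin_numE ?pmean_convpow_fin //.
by apply: pmean_ge0 => [s|s]; [exact: (convpow_prob hmu n).1 | rewrite lee_fin; exact: hh.1].
Qed.

Lemma drift_ge0 n : 0 <= drift h n.
Proof.
rewrite -lee_fin EFin_drift.
by apply: pmean_ge0 => s; [exact: (convpow_prob hmu n).1 | rewrite lee_fin; exact: hh.1].
Qed.

Lemma drift_subadd n m : drift h (n + m) <= drift h n + drift h m.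
Proof. by rewrite -lee_fin EFinD !EFin_drift; exact: pmean_convpow_subadd. Qed.

Lemma cvg_rate : (fun n => drift h n / n%:R) @ \oo --> rate h.
Proof. by have [g g_cvg _] := fekete drift_ge0 drift_subadd; rewrite /rate (cvg_lim _ g_cvg). Qed.

Lemma rate_ge0 : 0 <= rate h.
Proof. by have [g g_cvg g0] := fekete drift_ge0 drift_subadd; rewrite /rate (cvg_lim _ g_cvg). Qed.

End SubadditiveDrift.

Lemma rate_le (f g : G -> R) (c D : R) :
  nonneg_subadditive f -> nonneg_subadditive g -> mean_finite mu f -> mean_finite mu g ->
  0 <= c -> (forall s, f s <= c * g s + D) -> rate f <= c * rate g.
Proof.
move=> hf hg f_fin g_fin c0 fg; set D' := Num.max D 0.
have D0 : 0 <= D' by rewrite le_max lexx orbT.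
have drift_le n : drift f n <= c * drift g n + D'.
  rewrite -lee_fin EFinD EFinM !EFin_drift // -pmean_affine //; last 2 first.
  - exact: convpow_prob.
  - by move=> s; exact: hg.1.
  apply: le_pmean => [s|s]; first exact: (convpow_prob hmu n).1.
  by rewrite lee_fin (le_trans (fg s)) // lerD2l le_max lexx.
have cvg_bound : (fun n => c * (drift g n / n%:R) + D' / n%:R) @ \oo --> c * rate g.
  rewrite -[c * rate g]addr0; apply: cvgD; last exact: cvg_divrn0.
  by apply: cvgMl_tmp; exact: cvg_rate.
rewrite -(cvg_lim _ (cvg_rate hf f_fin)) // -(cvg_lim _ cvg_bound) //.
apply: ler_lim; [exact: cvgP (cvg_rate hf f_fin) | exact: cvgP cvg_bound |].
apply: nearW => n; rewrite mulrA -mulrDl; apply: ler_wpM2r; last exact: drift_le.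
by rewrite invr_ge0.
Qed.

End Rate.

Section Weights.
Variables (R : realType) (G : groupType).

Lemma weight_gt0 (w : G -> R) : is_weight w -> forall s, 0 < w s.
Proof. by move=> [[a [a0 wa]] _] s; exact: lt_le_trans a0 (wa s). Qed.

Lemma weight_log_shift (w : G -> R) : is_weight w ->
  exists2 K, 0 <= K & nonneg_subadditive (fun s => ln (w s) + K).
Proof.
move=> hw; have w_gt0 := weight_gt0 hw; have [[a [a0 wa]] [C [C0 wC]]] := hw.
exists (`|ln C| + `|ln a|); first by rewrite addr_ge0.
split=> [s|s t].
  have : ln a <= ln (w s) by rewrite ler_ln ?posrE.
  by have := ler_norm (- ln a); rewrite normrN; have := normr_ge0 (ln C); lra.
have : ln (w (s * t)%g) <= ln C + ln (w s) + ln (w t).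
  by rewrite -!lnM ?posrE ?mulr_gt0 // ler_ln ?posrE ?mulr_gt0.
by have := ler_norm (ln C); have := normr_ge0 (ln a); lra.
Qed.

Lemma equiv_weights_sym (w w' : G -> R) : equiv_weights w w' -> equiv_weights w' w.
Proof.
move=> [c [c' [c0 [c'0 ww']]]]; exists c'^-1, c^-1; rewrite !invr_gt0.
do 2!split=> //; move=> s; rewrite ler_pdivrMl // ler_pdivlMl //.
by have [] := ww' s.
Qed.

Lemma equiv_weights_ln (w w' : G -> R) : is_weight w -> is_weight w' ->
  equiv_weights w w' -> exists D, forall s, `|ln (w' s) - ln (w s)| <= D.
Proof.
move=> hw hw' [c [c' [c0 [c'0 ww']]]].
have [w_gt0 w'_gt0] := (weight_gt0 hw, weight_gt0 hw').
exists (`|ln c| + `|ln c'|) => s.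
have [cw w'c] := ww' s.
have : ln c + ln (w s) <= ln (w' s) by rewrite -lnM ?posrE // ler_ln ?posrE ?mulr_gt0.
have : ln (w' s) <= ln c' + ln (w s) by rewrite -lnM ?posrE // ler_ln ?posrE ?mulr_gt0.
have := ler_norm (- ln c); have := ler_norm (ln c'); rewrite normrN => *.
have := normr_ge0 (ln c); have := normr_ge0 (ln c') => *.
by rewrite ler_norml; apply/andP; split; lra.
Qed.

End Weights.

Section Lyapunov.
Variables (R : realType) (G : groupType) (mu : G -> R).
Hypothesis hmu : is_prob mu.

Lemma finite_log_momentE (w : G -> R) :
  finite_log_moment w mu = mean_finite mu (fun s => `|ln (w s)|).
Proof. by rewrite /finite_log_moment; under eq_esum do rewrite EFinM. Qed.

Lemma cvg_ly_seq_rate (w : G -> R) (K : R) : 0 <= K ->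
  nonneg_subadditive (fun s => ln (w s) + K) -> mean_finite mu (fun s => ln (w s) + K) ->
  ly_seq w mu @ \oo --> rate mu (fun s => ln (w s) + K).
Proof.
move=> K0 hK K_fin.
have -> : ly_seq w mu = fun n => drift mu (fun s => ln (w s) + K) n / n%:R - K / n%:R.
  apply: funext => n; rewrite /ly_seq.
  rewrite (gsum_mul_shift (f := fun s => ln (w s)) (convpow_prob hmu n) K0) //.
    by rewrite mulrBr !(mulrC n%:R^-1).
  - exact: hK.1.
  - exact: pmean_convpow_fin.
by rewrite -[rate _ _]subr0; apply: cvgB; [exact: cvg_rate | exact: cvg_divrn0].
Qed.

Lemma Ly_weight_rate (w : G -> R) : is_weight w -> finite_log_moment w mu ->
  exists K, let h := fun s => ln (w s) + K in
    [/\ nonneg_subadditive h, mean_finite mu h & ly_seq w mu @ \oo --> rate mu h].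
Proof.
move=> hw; rewrite finite_log_momentE => lnw_fin.
have [K K0 hK] := weight_log_shift hw.
have K_fin : mean_finite mu (fun s => ln (w s) + K).
  by apply: (pmean_dominated_lty (c := 1) (D := K) hmu _ ler01 _ lnw_fin) => s;
    rewrite ?mul1r ?lerD2r ?ler_norm.
by exists K; split => //; exact: cvg_ly_seq_rate.
Qed.

Lemma Ly_ge0 (w : G -> R) : is_weight w -> finite_log_moment w mu ->
  cvgn (ly_seq w mu) /\ 0 <= Ly w mu.
Proof.
move=> hw hm; have [K [hK K_fin ly_cvg]] := Ly_weight_rate hw hm.
by split; [exact: cvgP ly_cvg | rewrite /Ly (cvg_lim _ ly_cvg) //; exact: rate_ge0].
Qed.

Lemma Ly_le_rate (w f : G -> R) (c D : R) : is_weight w ->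
  nonneg_subadditive f -> mean_finite mu f -> 0 <= c ->
  (forall s, ln (w s) <= c * f s + D) ->
  cvgn (ly_seq w mu) /\ Ly w mu <= c * rate mu f.
Proof.
move=> hw hf f_fin c0 lnw_le; have [K K0 hK] := weight_log_shift hw.
have h_le s : ln (w s) + K <= c * f s + (D + K) by rewrite addrA lerD2r.
have K_fin := pmean_dominated_lty hmu hf.1 c0 h_le f_fin.
have ly_cvg := cvg_ly_seq_rate K0 hK K_fin.
split; first exact: cvgP ly_cvg.
by rewrite /Ly (cvg_lim _ ly_cvg) //; exact: rate_le h_le.
Qed.

Lemma finite_log_moment_equiv (w w' : G -> R) : is_weight w -> is_weight w' ->
  equiv_weights w w' -> finite_log_moment w mu -> finite_log_moment w' mu.
Proof.
move=> hw hw' ww'; have [D lnD] := equiv_weights_ln hw hw' ww'.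
rewrite !finite_log_momentE.
apply: (pmean_dominated_lty (c := 1) (D := D) hmu (fun s => normr_ge0 _) ler01) => s.
have := ler_normD (ln (w' s) - ln (w s)) (ln (w s)); rewrite subrK mul1r.
by have := lnD s; lra.
Qed.

Lemma Ly_le_equiv (w w' : G -> R) : is_weight w -> is_weight w' ->
  equiv_weights w w' -> finite_log_moment w mu -> Ly w' mu <= Ly w mu.
Proof.
move=> hw hw' ww' hm; have [D lnD] := equiv_weights_ln hw hw' ww'.
have [K [hK K_fin ly_cvg]] := Ly_weight_rate hw hm.
have lnw'_le s : ln (w' s) <= 1 * (ln (w s) + K) + (D - K).
  by rewrite mul1r; have := lnD s; rewrite ler_norml => /andP[_]; lra.
rewrite /Ly [X in _ <= X](cvg_lim _ ly_cvg) // -[rate _ _]mul1r.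
exact: (Ly_le_rate hw' hK K_fin ler01 lnw'_le).2.
Qed.

End Lyapunov.

Section Words.
Variables (G : groupType) (S : seq G).

Lemma foldr_mulg_seed (l : seq G) (x : G) :
  foldr (fun a b => (a * b)%g) x l = (foldr (fun a b => (a * b)%g) 1%g l * x)%g.
Proof. by elim: l => [|y l IH] /=; [rewrite mul1g | rewrite IH mulgA]. Qed.

Lemma in_pow_mul k j s t : in_pow S k s -> in_pow S j t -> in_pow S (k + j) (s * t)%g.
Proof.
move=> [l1 [size1 all1 <-]] [l2 [size2 all2 <-]]; exists (l1 ++ l2); split.
- by rewrite size_cat size1 size2.
- by rewrite all_cat all1 all2.
- by rewrite foldr_cat foldr_mulg_seed.
Qed.

Lemma in_pow_split k j s : in_pow S (k + j) s ->
  exists s1 s2, [/\ in_pow S k s1, in_pow S j s2 & s = (s1 * s2)%g].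
Proof.
move=> [l [size_l all_l <-]].
exists (foldr (fun a b => (a * b)%g) 1%g (take k l)), (foldr (fun a b => (a * b)%g) 1%g (drop k l)).
move: all_l; rewrite -{1}(cat_take_drop k l) all_cat => /andP[all_take all_drop].
split.
- by exists (take k l); rewrite size_takel // size_l leq_addr.
- by exists (drop k l); rewrite size_drop size_l addKn.
- by rewrite -{1}(cat_take_drop k l) foldr_cat foldr_mulg_seed.
Qed.

Lemma in_pow1 k : 1%g \in S -> in_pow S k 1%g.
Proof.
move=> S1; exists (nseq k 1%g); split; first exact: size_nseq.
  by rewrite all_nseq S1 orbT.
by elim: k => //= k ->; rewrite mul1g.
Qed.

Hypothesis S_gen : forall s, exists n, in_pow S n s.

Lemma in_pow_wordlen s : in_pow S (wordlen S s) s.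
Proof.
rewrite /wordlen; case: pselect => [ex|nex]; first by case: ex_minnP => m /asboolP.
by exfalso; have [n sn] := S_gen s; apply: nex; exists n; exact/asboolP.
Qed.

Lemma wordlen_min n s : in_pow S n s -> (wordlen S s <= n)%N.
Proof.
rewrite /wordlen; case: pselect => [ex|nex] sn.
  by case: ex_minnP => m _; apply; exact/asboolP.
by exfalso; apply: nex; exists n; exact/asboolP.
Qed.

Lemma wordlen_subadd s t : (wordlen S (s * t)%g <= wordlen S s + wordlen S t)%N.
Proof. by apply: wordlen_min; apply: in_pow_mul; exact: in_pow_wordlen. Qed.

End Words.

Lemma sup_image_continuous (R : realType) (f : R -> R) (E : set R) :
  E !=set0 -> has_ubound E -> {homo f : x y / x <= y} -> {for sup E, continuous f} ->
  sup (f @` E) = f (sup E).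
Proof.
move=> E0 Eub f_homo f_cont.
have fE0 : f @` E !=set0 by have [x Ex] := E0; exists (f x), x.
have fE_ub : ubound (f @` E) (f (sup E)).
  by move=> _ [x Ex <-]; apply: f_homo; exact: ub_le_sup.
apply/eqP; rewrite eq_le ge_sup //=; apply/ler_addgt0Pr => e e0.
have /cvgrPdist_lt/(_ e e0)/nbhs_ballP[d d0 fd] := f_cont.
have [x Ex supE_lt] := sup_adherent d0 (conj E0 Eub).
have x_le := ub_le_sup Eub Ex.
have : `|f (sup E) - f x| < e.
  by apply: fd; rewrite /ball /= ger0_norm ?subr_ge0 //; lra.
have : f x <= sup (f @` E) by apply: ub_le_sup; [exists (f (sup E)) | exists x].
by rewrite ltr_norml => ? /andP[_]; lra.
Qed.

Section WordSup.
Variables (R : realType) (G : groupType) (S : seq G) (h : G -> R).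
Hypotheses (hh : nonneg_subadditive h) (S1 : 1%g \in S).

Definition word_sup (k : nat) : R := sup [set h s | s in [set s | in_pow S k s]].

Lemma le_word_prod (l : seq G) : all (fun x => x \in S) l ->
  h (foldr (fun a b => (a * b)%g) 1%g l) <= (size l)%:R * \sum_(x <- S) h x + h 1%g.
Proof.
elim: l => [|x l IH] /=; first by rewrite mul0r add0r.
move=> /andP[xS lS]; apply: le_trans (hh.2 _ _) _.
have hx : h x <= \sum_(y <- S) h y.
  by rewrite (big_rem x) //= lerDl sumr_ge0 // => y _; exact: hh.1.
by rewrite mulrSr mulrDl mul1r; have := IH lS; lra.
Qed.

Lemma has_ubound_word_sup k : has_ubound [set h s | s in [set s | in_pow S k s]].
Proof.
exists (k%:R * \sum_(x <- S) h x + h 1%g) => _ [s [l [size_l all_l <-]] <-].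
by rewrite -size_l; exact: le_word_prod.
Qed.

Lemma le_word_sup k s : in_pow S k s -> h s <= word_sup k.
Proof. by move=> sk; apply: ub_le_sup; [exact: has_ubound_word_sup | exists s]. Qed.

Lemma word_sup_ge0 k : 0 <= word_sup k.
Proof. exact: le_trans (hh.1 1%g) (le_word_sup (in_pow1 k S1)). Qed.

Lemma word_sup_subadd k j : word_sup (k + j) <= word_sup k + word_sup j.
Proof.
apply: ge_sup; first by exists (h 1%g), 1%g => //; exact: in_pow1.
move=> _ [s /in_pow_split [s1 [s2 [s1k s2j ->]]] <-].
by apply: le_trans (hh.2 _ _) _; apply: lerD; exact: le_word_sup.
Qed.

End WordSup.

Section Growth.
Variables (R : realType) (G : groupType) (w : G -> R) (S : seq G) (K : R).
Hypotheses (hw : is_weight w) (S1 : 1%g \in S).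
Hypothesis hK : nonneg_subadditive (fun s => ln (w s) + K).

Lemma growth_seq_word_sup k : (0 < k)%N ->
  growth_seq w S k = expR ((word_sup S (fun s => ln (w s) + K) k - K) / k%:R).
Proof.
move=> k0; set h := fun s => ln (w s) + K; set r := k%:R^-1.
have r0 : 0 <= r by rewrite invr_ge0.
rewrite /growth_seq -/r.
have -> : [set w s `^ r | s in [set s | in_pow S k s]] =
    [set expR ((x - K) * r) | x in [set h s | s in [set s | in_pow S k s]]].
  rewrite image_comp; apply: eq_imagel => s _ /=.
  by rewrite /h addrK expRM lnK // posrE; exact: weight_gt0.
rewrite sup_image_continuous //.
- by exists (h 1%g), 1%g => //; exact: in_pow1.
- exact: has_ubound_word_sup.
- by move=> x y xy; rewrite ler_expR ler_wpM2r // lerB.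
- apply: continuous_comp; last exact: continuous_expR.
  by apply: cvgMl; apply: cvgB; [exact: cvg_id | exact: cvg_cst].
Qed.

Lemma cvg_word_sup_growth_rate :
  (fun k => word_sup S (fun s => ln (w s) + K) k / k%:R) @ \oo --> ln (growth_rate w S).
Proof.
set u := word_sup S _.
have [g u_cvg _] := fekete (word_sup_ge0 hK S1) (word_sup_subadd hK S1).
suff -> : ln (growth_rate w S) = g by [].
have v_cvg : (fun k => (u k - K) / k%:R) @ \oo --> g.
  under eq_fun do rewrite mulrBl.
  by rewrite -[g]subr0; apply: cvgB => //; exact: cvg_divrn0.
have : growth_seq w S @ \oo --> expR g.
  apply: cvg_trans (near_eq_cvg (f := expR \o fun k => (u k - K) / k%:R) _) _.
    by near=> k; rewrite /= growth_seq_word_sup //; near: k; exact: nbhs_infty_gt.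
  by apply: continuous_cvg => //; exact: continuous_expR.
by move=> gr_cvg; rewrite /growth_rate (cvg_lim _ gr_cvg) // expRK.
Unshelve. all: end_near.
Qed.

End Growth.

Lemma Ly_le_growth_speed (R : realType) (G : groupType) (mu w : G -> R) (S : seq G) :
  is_prob mu -> is_weight w -> symmetric_gen_set S -> finite_first_moment S mu ->
  cvgn (ly_seq w mu) /\ Ly w mu <= ln (growth_rate w S) * speed S mu.
Proof.
move=> hmu hw [S1 _ S_gen] hfm; have [K _ hK] := weight_log_shift hw.
set u := word_sup S (fun s => ln (w s) + K).
pose v s := (wordlen S s)%:R : R.
have hv : nonneg_subadditive v.
  by split=> [s|s t]; rewrite /v ?ler0n // -natrD ler_nat wordlen_subadd.
have v_fin : mean_finite mu v.
  by move: hfm; rewrite /finite_first_moment /pmean; under eq_esum do rewrite EFinM.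
have speedE : speed S mu = rate mu v.
  rewrite /speed /rate; congr (limn _); apply: funext => n.
  by rewrite /speed_seq /drift /pmean mulrC; under eq_esum do rewrite EFinM.
have Ly_le k : (0 < k)%N -> cvgn (ly_seq w mu) /\ Ly w mu <= u k / k%:R * rate mu v.
  move=> k0; have [M uM] := subadditive_le_lin (word_sup_ge0 hK S1) (word_sup_subadd hK S1) k0.
  apply: (Ly_le_rate (D := M - K) hmu hw hv v_fin) => [|s]; first by rewrite divr_ge0 ?word_sup_ge0.
  have := le_word_sup hK (in_pow_wordlen S_gen s); have := uM (wordlen S s).
  by rewrite /v /u; lra.
split; first exact: (Ly_le 1%N (ltn0Sn 0)).1.
have bound_cvg : (fun k => u k / k%:R * rate mu v) @ \oo --> ln (growth_rate w S) * rate mu v.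
  by apply: cvgM; [exact: cvg_word_sup_growth_rate | exact: cvg_cst].
rewrite speedE -(cvg_lim _ bound_cvg) //; apply: limr_ge; first exact: cvgP bound_cvg.
near=> k; have k0 : (0 < k)%N by near: k; exact: nbhs_infty_gt.
exact: (Ly_le k k0).2.
Unshelve. all: end_near.
Qed.

Theorem proposition3p3 (R : realType) (G : groupType) (w : G -> R) (mu : G -> R) :
  countable_group G -> is_weight w -> is_prob mu -> finite_log_moment w mu ->
  [/\ (* (i) *) cvgn (ly_seq w mu) /\ 0 <= Ly w mu,
      (* (ii) *) (forall w' : G -> R, is_weight w' -> equiv_weights w w' ->
                    Ly w' mu = Ly w mu)
    & (* (iii) *) (forall S : seq G, symmetric_gen_set S -> finite_first_moment S mu ->
                    cvgn (ly_seq w mu) /\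
                    Ly w mu <= ln (growth_rate w S) * speed S mu)].
Proof.
move=> _ hw hmu hm; split.
- exact: Ly_ge0.
- move=> w' hw' ww'; have hm' := finite_log_moment_equiv hmu hw hw' ww' hm.
  apply: le_anti; rewrite Ly_le_equiv //=.
  exact: Ly_le_equiv hw' hw (equiv_weights_sym ww') hm'.
- by move=> S hS hfm; exact: Ly_le_growth_speed.
Qed.
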